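(* Let $n\ge w\ge t\ge 1$ and $q,q'\ge 1$ be integers. Let $S\subset Q_{q*}^n$ be an $A(n,q,w,t)$ design. For each pair consisting of a codeword $a\in S$, whose non-$*$ entries in increasing order of position are $a^1,\dots,a^t$, and a word $(b_1,\dots,b_t)\in Q_{q'}^t$, form the word in $(Q_q\times Q_{q'})_*^n$ which has $*$ exactly where $a$ has $*$ and whose $j$-th non-$*$ entry (in increasing order of position) is $(a^j,b_j)$, $j=1,\dots,t$. Identifying $Q_q\times Q_{q'}$ with $Q_{qq'}$, let $U\subset Q_{qq'*}^n$ be the set of all such words. Then $U$ is an $A(n,qq',w,t)$ design.
   Context: For an integer $q\ge1$, $Q_q=\{0,1,\dots,q-1\}$ and $Q_{q*}=Q_q\cup\{*\}$ (for a finite alphabet $A$, $A_*=A\cup\{*\}$). The weight of a word $u\in Q_{q*}^n$ is $n$ minus the number of $*$ symbols in $u$. For $u,v\in Q_{q*}^n$ we say $u$ extends $v$ if $u_i=v_i$ for every position $i$ with $v_i\neq *$. An $A(n,q,w,t)$ design is a set $S$ of words of weight $t$ in $Q_{q*}^n$ such that every word of weight $w$ in $Q_{q*}^n$ extends exactly one element of $S$. *)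

From mathcomp Require Import all_boot.
From mathcomp Require Import zify.
Set Implicit Arguments. Unset Strict Implicit. Unset Printing Implicit Defensive.

(* Words of Q_{q*}^n: functions 'I_n -> option 'I_q, None = the symbol * *)
Definition word (n q : nat) := {ffun 'I_n -> option 'I_q}.

Definition weight n q (u : word n q) : nat := #|[set i | u i != None]|.

Definition extends n q (u v : word n q) : Prop :=
  forall i : 'I_n, v i != None -> u i = v i.

Definition is_design (n q w t : nat) (S : {set word n q}) : Prop :=
  (forall a, a \in S -> weight a = t) /\
  (forall u : word n q, weight u = w ->
     exists! a, a \in S /\ extends u a).

(* identification Q_q x Q_q' ~ Q_{qq'} : (x,y) |-> x*q' + y *)
Lemma pair_code_subproof q q' (x : 'I_q) (y : 'I_q') : x * q' + y < q * q'.
Proof.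
have hx := ltn_ord x; have hy := ltn_ord y.
nia.
Qed.

Definition pair_code q q' (x : 'I_q) (y : 'I_q') : 'I_(q * q') :=
  Ordinal (pair_code_subproof x y).

(* number of non-* positions of a strictly before position i
   (so the non-* entry at i is the (rank+1)-th one, 0-indexed rank) *)
Definition nonstar_rank n q (a : word n q) (i : 'I_n) : nat :=
  #|[set k : 'I_n | (k < i) && (a k != None)]|.

Definition combine_word n q q' t (a : word n q) (b : t.-tuple 'I_q')
  : word n (q * q') :=
  [ffun i => match a i, onth b (nonstar_rank a i) with
             | Some x, Some y => Some (pair_code x y)
             | _, _ => None
             end].

Definition product_design n q q' t (S : {set word n q}) : {set word n (q * q')} :=
  [set combine_word a b | a in S, b in [set: t.-tuple 'I_q']].

(* Projecting Q_q x Q_q' onto Q_q sends a word u of weight w to a word of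
   weight w, hence to one extending a unique a in S, and sends every codeword
   of U built from a' in S, and extended by u, to a' -- so a' = a.  Reading
   the second coordinates of u on the support of a gives b with
   combine_word a b extended by u, and two words with the same support that
   are both extended by u are equal. *)
From mathcomp Require Import all_boot.
Set Implicit Arguments. Unset Strict Implicit. Unset Printing Implicit Defensive.

Section PairDecoding.
Variables q q' : nat.

Lemma pair_modulus_gt0 (y : 'I_(q * q')) : 0 < q'.
Proof. by have := leq_ltn_trans (leq0n y) (ltn_ord y); rewrite muln_gt0 => /andP[]. Qed.

Lemma pair_fst_subproof (y : 'I_(q * q')) : y %/ q' < q.
Proof. by rewrite ltn_divLR ?(pair_modulus_gt0 y). Qed.

Lemma pair_snd_subproof (y : 'I_(q * q')) : y %% q' < q'.
Proof. by rewrite ltn_pmod ?(pair_modulus_gt0 y). Qed.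

Definition pair_fst (y : 'I_(q * q')) : 'I_q := Ordinal (pair_fst_subproof y).
Definition pair_snd (y : 'I_(q * q')) : 'I_q' := Ordinal (pair_snd_subproof y).

Lemma pair_codeK (y : 'I_(q * q')) : pair_code (pair_fst y) (pair_snd y) = y.
Proof. by apply: val_inj; rewrite /= -divn_eq. Qed.

Lemma pair_fst_code (x : 'I_q) (z : 'I_q') : pair_fst (pair_code x z) = x.
Proof.
apply: val_inj => /=; have hz := ltn_ord z.
rewrite divnDl ?dvdn_mull // mulnK ?(leq_ltn_trans _ hz) //.
by rewrite divn_small // addn0.
Qed.

End PairDecoding.

Section Words.
Variables n q : nat.
Implicit Types (a : word n q) (i j : 'I_n).

Lemma nonstar_rank_lt_weight a i : a i != None -> nonstar_rank a i < weight a.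
Proof.
move=> ai; apply: proper_card; apply/properP; split.
  by apply/subsetP=> k; rewrite !inE => /andP[_ ->].
by exists i; rewrite !inE ?ltnn.
Qed.

Lemma nonstar_rank_ltn a i j :
  a i != None -> i < j -> nonstar_rank a i < nonstar_rank a j.
Proof.
move=> ai ij; apply: proper_card; apply/properP; split.
  apply/subsetP=> k; rewrite !inE => /andP[ki ->]; rewrite andbT.
  exact: ltn_trans ki ij.
by exists i; rewrite !inE ?ltnn // ij.
Qed.

Lemma nonstar_rank_inj a i j : a i != None -> a j != None ->
  nonstar_rank a i = nonstar_rank a j -> i = j.
Proof.
move=> ai aj eij; case: (ltngtP i j) => [ij|ji|]; last exact: val_inj.
- by have := nonstar_rank_ltn ai ij; rewrite eij ltnn.
- by have := nonstar_rank_ltn aj ji; rewrite eij ltnn.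
Qed.

Lemma extends_same_support (u v1 v2 : word n q) :
  (forall i, (v1 i != None) = (v2 i != None)) ->
  extends u v1 -> extends u v2 -> v1 = v2.
Proof.
move=> supp uv1 uv2; apply/ffunP=> i.
case v1i: (v1 i) (supp i) => [x|]; case v2i: (v2 i) => [y|] //= _.
by rewrite -v1i -v2i -uv1 ?v1i // -uv2 ?v2i.
Qed.

End Words.

Section CombineWord.
Variables n q q' t : nat.
Implicit Types (a : word n q) (b : t.-tuple 'I_q') (u v : word n (q * q')).

Definition word_fst u : word n q := [ffun i => omap (@pair_fst q q') (u i)].

Lemma weight_word_fst u : weight (word_fst u) = weight u.
Proof. by apply: eq_card => i; rewrite !inE ffunE; case: (u i). Qed.

Lemma extends_word_fst u v : extends u v -> extends (word_fst u) (word_fst v).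
Proof. by move=> uv i; rewrite !ffunE; case vi: (v i) => //= _; rewrite uv ?vi. Qed.

Lemma combine_wordE a b i (rt : nonstar_rank a i < t) :
  combine_word a b i = omap (fun x => pair_code x (tnth b (Ordinal rt))) (a i).
Proof.
rewrite ffunE -[nonstar_rank a i]/(nat_of_ord (Ordinal rt)).
by rewrite ((tnth_onth _ b (Ordinal rt)).1 erefl); case: (a i).
Qed.

Lemma combine_word_support a b i :
  weight a = t -> (combine_word a b i != None) = (a i != None).
Proof.
move=> wa; case ai: (a i) => [x|]; last by rewrite ffunE ai.
have rt : nonstar_rank a i < t by rewrite -wa nonstar_rank_lt_weight ?ai.
by rewrite (combine_wordE b rt) ai.
Qed.

Lemma weight_combine_word a b : weight a = t -> weight (combine_word a b) = t.
Proof.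
by move=> wa; rewrite -{2}wa; apply: eq_card => i; rewrite !inE combine_word_support.
Qed.

Lemma word_fst_combine_word a b : weight a = t -> word_fst (combine_word a b) = a.
Proof.
move=> wa; apply/ffunP=> i; rewrite ffunE.
case ai: (a i) => [x|]; last by rewrite ffunE ai.
have rt : nonstar_rank a i < t by rewrite -wa nonstar_rank_lt_weight ?ai.
by rewrite (combine_wordE b rt) ai /= pair_fst_code.
Qed.

Variable d0 : 'I_q'.

(* [d0] is a junk value, never read when weight a = t and word_fst u extends a. *)
Definition word_snd_along a u : t.-tuple 'I_q' :=
  [tuple match [pick i | (a i != None) && (nonstar_rank a i == j)] with
         | Some i => odflt d0 (omap (@pair_snd q q') (u i))
         | None => d0
         end | j < t].

Lemma extends_combine_word_snd_along a u :
  weight a = t -> extends (word_fst u) a ->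
  extends u (combine_word a (word_snd_along a u)).
Proof.
move=> wa ua i; rewrite combine_word_support // => ai.
have rt : nonstar_rank a i < t by rewrite -wa nonstar_rank_lt_weight.
rewrite (combine_wordE _ rt) tnth_mktuple.
case: pickP => [k /andP[ak /eqP /= eki]|].
  have <- := nonstar_rank_inj ak ai eki.
  have := ua k ak; rewrite ffunE.
  case: (u k) => [y|] /= ak_eq; last by rewrite -ak_eq in ak.
  by rewrite -ak_eq /= pair_codeK.
by move/(_ i); rewrite ai eqxx.
Qed.

End CombineWord.

Theorem proposition3 (n w t q q' : nat) (S : {set word n q}) :
  1 <= t -> t <= w -> w <= n -> 1 <= q -> 1 <= q' ->
  @is_design n q w t S ->
  @is_design n (q * q') w t (@product_design n q q' t S).
Proof.
move=> _ _ _ _ q'_gt0 [wS designS]; split.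
  by move=> c /imset2P[a b aS _ ->]; apply: weight_combine_word; apply: wS.
move=> u wu.
have [a [[aS ua] a_uniq]] := designS (word_fst u) (etrans (weight_word_fst u) wu).
have wa := wS a aS.
pose b := word_snd_along t (Ordinal q'_gt0) a u.
have u_ext_ab : extends u (combine_word a b) := extends_combine_word_snd_along wa ua.
exists (combine_word a b); split.
  by split=> //; apply/imset2P; exists a b; rewrite ?inE.
move=> c [/imset2P[a' b' a'S _ ->] u_ext_c].
have wa' := wS a' a'S.
have a_eq : a = a'.
  apply: a_uniq; split=> //.
  by rewrite -(word_fst_combine_word b' wa'); apply: extends_word_fst.
subst a'.
apply: (extends_same_support _ u_ext_ab u_ext_c) => i.
by rewrite !combine_word_support.
Qed.
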